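(* Let $G=(V,E)$ be $(2,2)$-$C_i$-tight and let $v\in V$ have degree 3 with $N(v)\cap N(v')=\emptyset$. Then either $G[N(v)\cup\{v\}]\cong K_4$, or there exist $x,y\in N(v)$ with $xy\notin E$ such that $G-\{v,v'\}+\{xy,x'y'\}$ is $(2,2)$-$C_i$-tight.
   Context: A $\mathbb{Z}_2$-symmetric graph is a finite simple graph $G=(V,E)$ with an automorphism $\theta$, $\theta^2=\mathrm{id}$; write $v'=\theta(v)$. A vertex is fixed if $v'=v$; an edge $uv$ is fixed if $\{u',v'\}=\{u,v\}$. $G$ is $(2,2)$-sparse if every subgraph $(V',E')$ with $V'\ne\emptyset$ has $|E'|\le2|V'|-2$, $(2,2)$-tight if also $|E|=2|V|-2$. $G$ is $(2,2)$-$C_i$-tight if it is $(2,2)$-tight and $\theta$ fixes no vertex and no edge. $N(v)$ is the set of neighbours of $v$; $G-\{v,v'\}+\{xy,x'y'\}$ denotes deleting $v,v'$ and adding edges $xy,x'y'$, with the restricted involution. *)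

From mathcomp Require Import all_boot.
Set Implicit Arguments. Unset Strict Implicit. Unset Printing Implicit Defensive.

Definition simple_graph (T : finType) (V : {set T}) (E : {set {set T}}) : Prop :=
  forall e, e \in E -> e \subset V /\ #|e| = 2.

(* Z2-symmetric graph: th is an involution of V (given as a global involution
   of T preserving V) that is a graph automorphism. *)
Definition Z2_graph (T : finType) (V : {set T}) (E : {set {set T}}) (th : T -> T) : Prop :=
  [/\ simple_graph V E,
      (forall x, th (th x) = x),
      (forall x, (th x \in V) = (x \in V)) &
      (forall e : {set T}, (th @: e \in E) = (e \in E))].

Definition sparse22 (T : finType) (V : {set T}) (E : {set {set T}}) : Prop :=
  forall (V' : {set T}) (E' : {set {set T}}),
    V' != set0 -> V' \subset V -> E' \subset E ->
    (forall e, e \in E' -> e \subset V') ->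
    (#|E'| + 2 <= 2 * #|V'|)%N.

Definition tight22 (T : finType) (V : {set T}) (E : {set {set T}}) : Prop :=
  sparse22 V E /\ (#|E| + 2 = 2 * #|V|)%N.

Definition Ci_tight (T : finType) (V : {set T}) (E : {set {set T}}) (th : T -> T) : Prop :=
  [/\ Z2_graph V E th, tight22 V E,
      (forall x, x \in V -> th x != x) &
      (forall e : {set T}, e \in E -> th @: e != e)].

Definition nbhd (T : finType) (V : {set T}) (E : {set {set T}}) (v : T) : {set T} :=
  [set u in V | [set v; u] \in E].

Definition induced_iso_K4 (T : finType) (E : {set {set T}}) (S : {set T}) : Prop :=
  exists f : 'I_4 -> T,
    [/\ injective f, f @: setT = S &
        (forall i j : 'I_4, i != j -> [set f i; f j] \in E)].

Definition red_V (T : finType) (V : {set T}) (th : T -> T) (v : T) : {set T} :=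
  V :\: [set v; th v].
Definition red_E (T : finType) (V : {set T}) (E : {set {set T}}) (th : T -> T)
    (v x y : T) : {set {set T}} :=
  [set e in E | e \subset red_V V th v] :|: [set [set x; y]; [set th x; th y]].

From mathcomp Require Import all_boot.
From mathcomp.zify Require Import zify_ssreflect.
Set Implicit Arguments. Unset Strict Implicit. Unset Printing Implicit Defensive.

(* Write N = N(v) = {s, t, u} and W = V - {v, v'}.  Deleting v and v' removes
   six edges, so for a non-adjacent pair x, y in N the graph on W with xy and
   x'y' added has the right edge count, and it is C_i-tight unless some Y in W
   spans too many edges.  Such a Y yields a blocker for xy: a tight set
   containing x, y, or a set with 2|Y| - 3 edges containing x, y, x', y' but
   neither z nor z' (z the third neighbour).  Putting v (and v') back shows that
   a set in W containing N spans at most 2|Y| - 3 edges, and one containing N and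
   N' = th(N) at most 2|Y| - 4.  Uncrossing blockers with
   |E(X u Y)| + |E(X n Y)| >= |E(X)| + |E(Y)| then shows that whenever some pair
   of N is non-adjacent, not all non-adjacent pairs can be blocked; otherwise
   G[N + v] = K4. *)

Lemma set3_of_card3 (T : finType) (A : {set T}) : #|A| = 3 ->
  exists a b c, [/\ a != b, a != c, b != c & A = [set a; b; c]].
Proof.
move=> A3; have /card_gt0P[a aA] : 0 < #|A| by rewrite A3.
have /cards2P[b [c [bc defAa]]] : #|A :\ a| == 2.
  by move: A3; rewrite (cardsD1 a A) aA add1n => -[->].
have : b \in A :\ a /\ c \in A :\ a by rewrite defAa !inE !eqxx orbT.
rewrite !inE => -[/andP[ba _] /andP[ca _]].
exists a, b, c; split; rewrite 1?[a == _]eq_sym //.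
by rewrite -setUA -defAa setD1K.
Qed.

Lemma induced_iso_K4_clique (T : finType) (E : {set {set T}}) (v a b c : T) :
  v != a -> v != b -> v != c -> a != b -> a != c -> b != c ->
  [set v; a] \in E -> [set v; b] \in E -> [set v; c] \in E ->
  [set a; b] \in E -> [set a; c] \in E -> [set b; c] \in E ->
  induced_iso_K4 E (v |: [set a; b; c]).
Proof.
move=> va vb vc ab ac bc e1 e2 e3 e4 e5 e6.
exists (fun i : 'I_4 => nth v [:: v; a; b; c] i); split.
- move=> [i Hi] [j Hj] /= h; apply/val_inj => /=; move: Hi Hj h.
  do 4?[case: i => [|i]]; do 4?[case: j => [|j]] => //= _ _ h;
  by move: va vb vc ab ac bc; rewrite h eqxx.
- apply/setP=> w; rewrite !inE; apply/imsetP/idP.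
    case=> [[i Hi]] _ ->; move: Hi.
    by do 4?[case: i => [|i]] => //= _; rewrite eqxx ?orbT.
  rewrite -!orbA => /or4P[]/eqP->.
  + by exists (Ordinal (isT : 0 < 4)).
  + by exists (Ordinal (isT : 1 < 4)).
  + by exists (Ordinal (isT : 2 < 4)).
  + by exists (Ordinal (isT : 3 < 4)).
- move=> [i Hi] [j Hj]; move: Hi Hj.
  do 4?[case: i => [|i]]; do 4?[case: j => [|j]] => //= _ _ _;
  by rewrite ?e1 ?e2 ?e3 ?e4 ?e5 ?e6 // setUC ?e1 ?e2 ?e3 ?e4 ?e5 ?e6.
Qed.

Lemma card_set3 (T : finType) (s t u : T) :
  s != t -> s != u -> t != u -> #|[set s; t; u]| = 3.
Proof.
by move=> st su tu; rewrite setUC cardsU1 cards2 st !inE negb_or eq_sym su eq_sym tu.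
Qed.

Section InducedEdges.
Variables (T : finType) (E : {set {set T}}).

Definition induced (X : {set T}) := [set e in E | e \subset X].

Definition ecount (X : {set T}) := #|induced X|.

Definition cross (X Y : {set T}) :=
  [set e in E | [&& e \subset X :|: Y, ~~ (e \subset X) & ~~ (e \subset Y)]].

Lemma ecountUI (X Y : {set T}) :
  ecount (X :|: Y) + ecount (X :&: Y) = ecount X + ecount Y + #|cross X Y|.
Proof.
have defU : induced (X :|: Y) = (induced X :|: induced Y) :|: cross X Y.
  apply/setP=> e; rewrite !inE; case: (e \in E) => //=.
  case hX: (e \subset X); first by rewrite (subset_trans hX (subsetUl X Y)).
  case hY: (e \subset Y); first by rewrite (subset_trans hY (subsetUr X Y)).
  by rewrite /= andbT.
have defI : induced X :&: induced Y = induced (X :&: Y).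
  by apply/setP=> e; rewrite !inE subsetI; case: (e \in E).
have disj : (induced X :|: induced Y) :&: cross X Y = set0.
  apply/setP=> e; rewrite !inE; case: (e \in E) => //=.
  by case: (e \subset X); case: (e \subset Y); rewrite ?andbF.
have := cardsUI (induced X :|: induced Y) (cross X Y); rewrite disj cards0 addn0 -defU.
have := cardsUI (induced X) (induced Y); rewrite /ecount defI; lia.
Qed.

Lemma cross_meet_subset (A B C : {set T}) : A :&: B :&: C = set0 ->
  cross (A :&: C) (B :&: C) \subset cross ((B :|: C) :&: A) ((A :|: C) :&: B).
Proof.
move=> ABC0; have notA w : w \in B -> w \in C -> w \notin A.
  move=> wB wC; apply/negP=> wA.
  suff : w \in A :&: B :&: C by rewrite ABC0 inE.
  by rewrite !inE wA wB wC.
apply/subsetP=> e; rewrite !inE => /andP[-> /and3P[eU nAC nBC]] /=.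
apply/and3P; split.
- apply: (subset_trans eU); apply/subsetP=> w; rewrite !inE.
  by case/orP=> /andP[-> ->]; rewrite ?orbT.
- case/subsetPn: nAC => w we wAC; apply/subsetPn; exists w => //.
  move: wAC (subsetP eU w we); rewrite !inE => /negbTE-> /= /andP[wB wC].
  by rewrite (negbTE (notA w wB wC)) andbF.
- case/subsetPn: nBC => w we wBC; apply/subsetPn; exists w => //.
  move: wBC (subsetP eU w we); rewrite !inE => /negbTE->; rewrite orbF => /andP[wA wC].
  apply/negP=> /andP[_ wB]; by move: (notA w wB wC); rewrite wA.
Qed.

Lemma ecount_supermodular (X Y : {set T}) :
  ecount X + ecount Y <= ecount (X :|: Y) + ecount (X :&: Y).
Proof. rewrite ecountUI; lia. Qed.

Lemma ecount_star (X S : {set T}) w : w \notin X -> S \subset X ->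
  (forall u, u \in S -> [set w; u] \in E) -> ecount X + #|S| <= ecount (w |: X).
Proof.
move=> wX SX wS.
have inj : {in S &, injective (fun u => [set w; u])}.
  move=> u1 u2 u1S u2S h.
  have : u1 \in [set w; u2] by rewrite -h !inE eqxx orbT.
  rewrite !inE => /orP[/eqP u1w|/eqP //].
  by move: wX; rewrite -u1w (subsetP SX).
have disj : induced X :&: [set [set w; u] | u in S] = set0.
  apply/setP=> e; rewrite !inE; apply/negbTE/negP=> /andP[/andP[_ eX] /imsetP[u _ eu]].
  by move: wX; rewrite (subsetP eX) // eu !inE eqxx.
have := cardsUI (induced X) [set [set w; u] | u in S].
rewrite disj cards0 addn0 (card_in_imset inj) => <-.
apply: subset_leq_card; apply/subsetP=> e; rewrite !inE => /orP[/andP[-> eX]|].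
  by rewrite (subset_trans eX (subsetUr _ _)).
move=> /imsetP[u uS ->]; rewrite wS //=; apply/subsetP=> z; rewrite !inE.
by case/orP=> [->//|/eqP->]; rewrite (subsetP SX) ?orbT.
Qed.

Lemma ecount_star3 (X : {set T}) w a b c : w \notin X ->
  a != b -> a != c -> b != c -> a \in X -> b \in X -> c \in X ->
  [set w; a] \in E -> [set w; b] \in E -> [set w; c] \in E ->
  ecount X + 3 <= ecount (w |: X).
Proof.
move=> wX ab ac bc aX bX cX wa wb wc; rewrite -(card_set3 ab ac bc).
apply: ecount_star => //.
  by apply/subsetP=> z; rewrite !inE -orbA => /or3P[]/eqP->.
by move=> z; rewrite !inE -orbA => /or3P[]/eqP->.
Qed.

Lemma sparse22_ecount (V X : {set T}) : sparse22 V E ->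
  X \subset V -> X != set0 -> ecount X + 2 <= 2 * #|X|.
Proof.
move=> sparseE XV X0; apply: sparseE => //.
  by apply/subsetP=> e; rewrite inE => /andP[].
by move=> e; rewrite inE => /andP[].
Qed.

End InducedEdges.

Section Stars.
Variables (T : finType) (V : {set T}) (E : {set {set T}}).
Hypothesis simpleE : simple_graph V E.

Definition star w := [set e in E | w \in e].

Lemma star_nbhd w : star w = [set [set w; u] | u in nbhd V E w].
Proof.
apply/setP=> e; rewrite inE; apply/andP/imsetP => [[eE we] | [u uN ->]].
  have [eV /eqP/cards2P[p [q [pq defe]]]] := simpleE eE.
  move: we eV; rewrite defe !inE subUset !sub1set => /orP[]/eqP-> /andP[pV qV].
    by exists q; rewrite // inE qV -defe.
  by exists p; [rewrite inE pV setUC -defe | rewrite setUC].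
by move: uN; rewrite !inE eqxx => /andP[_ ->].
Qed.

Lemma card_star w : #|star w| = #|nbhd V E w|.
Proof.
rewrite star_nbhd card_in_imset // => u1 u2; rewrite !inE => /andP[_ e1] _ h.
have : u1 \in [set w; u2] by rewrite -h !inE eqxx orbT.
rewrite !inE => /orP[/eqP u1w|/eqP //].
by have [_] := simpleE e1; rewrite u1w setUid cards1.
Qed.

End Stars.

Lemma imset_set2 (aT rT : finType) (f : aT -> rT) x y : f @: [set x; y] = [set f x; f y].
Proof. by rewrite imsetU1 imset_set1. Qed.

Section Involution.
Variables (T : finType) (th : T -> T).
Hypothesis thK : involutive th.

Lemma in_imset_th (X : {set T}) x : (x \in th @: X) = (th x \in X).
Proof. by rewrite -{1}(thK x) (mem_imset _ _ (inv_inj thK)). Qed.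

Lemma imset_thK (X : {set T}) : th @: (th @: X) = X.
Proof. by apply/setP=> x; rewrite !in_imset_th thK. Qed.

Lemma imset_th_eq (e S : {set T}) : (th @: e == S) = (e == th @: S).
Proof. by apply/eqP/eqP=> [<- | ->]; rewrite imset_thK. Qed.

Lemma card_imset_th (X : {set T}) : #|th @: X| = #|X|.
Proof. exact: card_imset (inv_inj thK). Qed.

Variable E : {set {set T}}.
Hypothesis thE : forall e : {set T}, (th @: e \in E) = (e \in E).

Lemma set2_th_edge x y : ([set th x; th y] \in E) = ([set x; y] \in E).
Proof. by rewrite -imset_set2 thE. Qed.

Lemma ecount_imset_th (X : {set T}) : ecount E X <= ecount E (th @: X).
Proof.
have imset_th_inj := can_inj (f := fun Z : {set T} => th @: Z) (g := fun Z => th @: Z) imset_thK.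
rewrite /ecount -(card_imset (induced E X) imset_th_inj).
apply: subset_leq_card; apply/subsetP=> e' /imsetP[e]; rewrite inE => /andP[eE eX] ->.
by rewrite inE thE eE /=; apply/subsetP=> w; rewrite !in_imset_th; apply: (subsetP eX).
Qed.

End Involution.

Section Reduction.
Variables (T : finType) (V : {set T}) (E : {set {set T}}) (th : T -> T) (v : T).
Hypothesis simpleE : simple_graph V E.
Hypothesis thK : involutive th.
Hypothesis thV : forall x, (th x \in V) = (x \in V).
Hypothesis thE : forall e : {set T}, (th @: e \in E) = (e \in E).
Hypothesis sparseE : sparse22 V E.
Hypothesis th_free_V : forall x, x \in V -> th x != x.
Hypothesis th_free_E : forall e : {set T}, e \in E -> th @: e != e.
Hypothesis vV : v \in V.
Hypothesis N_disjoint : nbhd V E v :&: nbhd V E (th v) = set0.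
Hypothesis countE : #|E| + 2 = 2 * #|V|.

Local Notation N := (nbhd V E v).
Local Notation W := (red_V V th v).

Lemma card_edge e : e \in E -> #|e| = 2.
Proof. by case/simpleE. Qed.

Lemma nbhd_edge u : u \in N -> [set v; u] \in E.
Proof. by rewrite inE => /andP[]. Qed.

Lemma nbhd_thv : nbhd V E (th v) = th @: N.
Proof.
apply/setP=> w; rewrite (in_imset_th thK) !inE thV.
by rewrite -(set2_th_edge thE v (th w)) thK.
Qed.

Lemma th_nbhd_notin u : u \in N -> th u \notin N.
Proof.
move=> uN; apply/negP=> thuN.
have : th u \in N :&: nbhd V E (th v) by rewrite inE thuN nbhd_thv (in_imset_th thK) thK.
by rewrite N_disjoint inE.
Qed.

Lemma nbhd_in_V u : u \in N -> u \in V.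
Proof. by rewrite inE => /andP[]. Qed.

Lemma nbhd_neq_v u : u \in N -> u != v.
Proof.
move=> /nbhd_edge/card_edge; apply: contraPneq => ->.
by rewrite setUid cards1.
Qed.

Lemma nbhd_neq_thv u : u \in N -> u != th v.
Proof.
move=> /nbhd_edge vuE; apply/eqP=> u_thv; move: (th_free_E vuE).
by rewrite u_thv imset_set2 thK setUC eqxx.
Qed.

Lemma in_W w : (w \in W) = [&& w != v, w != th v & w \in V].
Proof. by rewrite /red_V !inE negb_or andbA. Qed.

Lemma th_in_W w : (th w \in W) = (w \in W).
Proof.
rewrite !in_W thV -{1}(thK v) !(inj_eq (inv_inj thK)).
by rewrite andbCA.
Qed.

Lemma v_notin_W : v \notin W. Proof. by rewrite in_W eqxx. Qed.

Lemma thv_notin_W : th v \notin W. Proof. by rewrite in_W eqxx andbF. Qed.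

Lemma nbhd_in_W u : u \in N -> u \in W.
Proof. by move=> uN; rewrite in_W nbhd_neq_v // nbhd_neq_thv // nbhd_in_V. Qed.

Lemma th_nbhd_in_W u : u \in N -> th u \in W.
Proof. by move=> uN; rewrite th_in_W nbhd_in_W. Qed.

Lemma W_subset_V : W \subset V.
Proof. by apply/subsetP=> w; rewrite in_W => /and3P[]. Qed.

Lemma imset_th_sub_W (Y : {set T}) : (th @: Y \subset W) = (Y \subset W).
Proof.
apply/idP/idP=> YW; apply/subsetP=> w wY; rewrite -th_in_W; apply: (subsetP YW).
  by rewrite (in_imset_th thK) thK.
by rewrite -(in_imset_th thK).
Qed.

Lemma sparse_W (X : {set T}) x : X \subset W -> x \in X -> ecount E X + 2 <= 2 * #|X|.
Proof.
move=> XW xX; apply: (sparse22_ecount sparseE); first exact: subset_trans XW W_subset_V.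
by apply/set0Pn; exists x.
Qed.

Lemma added_edges_neq t u : t \in N -> u \in N -> [set t; u] != [set th t; th u].
Proof.
move=> tN uN; apply/eqP=> h; have : t \in [set th t; th u] by rewrite -h !inE eqxx.
rewrite !inE => /orP[/eqP t_tht|/eqP t_thu].
  by move: (th_free_V (nbhd_in_V tN)); rewrite -t_tht eqxx.
by move: (th_nbhd_notin uN); rewrite -t_thu tN.
Qed.

Definition tight_blocker x y (Y : {set T}) :=
  [/\ Y \subset W, x \in Y, y \in Y & 2 * #|Y| <= ecount E Y + 2].

Definition sym_blocker x y z (Y : {set T}) :=
  [/\ Y \subset W, [/\ x \in Y, y \in Y, th x \in Y & th y \in Y], z \notin Y, th z \notin Y &
      2 * #|Y| <= ecount E Y + 3].

Definition blocked x y z := (exists Y, tight_blocker x y Y) \/ (exists Y, sym_blocker x y z Y).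

Lemma sym_blocker_sym x y z Y : sym_blocker x y z Y -> sym_blocker y x z Y.
Proof. by case=> YW [? ? ? ?] ? ? ?; split. Qed.

Lemma blocked_sym x y z : blocked x y z -> blocked y x z.
Proof.
by case=> [[Y [? ? ? ?]] | [Y /sym_blocker_sym b]]; [left; exists Y; split | right; exists Y].
Qed.

Definition added x y (Y : {set T}) :=
  [set e in [set [set x; y]; [set th x; th y]] | e \subset Y].

Lemma card_added x y (Y : {set T}) :
  #|added x y Y| <= (x \in Y) && (y \in Y) + (th x \in Y) && (th y \in Y).
Proof.
have sub : added x y Y \subset
    (if (x \in Y) && (y \in Y) then [set [set x; y]] else set0) :|:
    (if (th x \in Y) && (th y \in Y) then [set [set th x; th y]] else set0).
  apply/subsetP=> e; rewrite !inE => /andP[/orP[]/eqP-> ]; rewrite subUset !sub1set => ->.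
    by rewrite inE eqxx.
  by rewrite inE eqxx orbT.
apply: (leq_trans (subset_leq_card sub)); apply: (leq_trans (leq_card_setU _ _)).
by case: (_ && _); case: (_ && _); rewrite ?cards1 ?cards0.
Qed.

(* [added x y Y] are the new edges xy, x'y' spanned by Y, so [good x y] is the
   (2,2)-sparsity of the reduced graph. *)
Definition good x y := [forall Y : {set T}, (Y \subset W) ==> (Y != set0) ==>
  (ecount E Y + #|added x y Y| + 2 <= 2 * #|Y|)].

(* Side conditions [_ \in _] and [_ \subset W] for sets built from the
   hypotheses by union, intersection and [th @:]. *)
Local Ltac sub_W :=
  lazymatch goal with
  | |- is_true (?A \subset _) =>
    lazymatch A with
    | _ (@setI _ _ _) => apply: subIset; apply/orP; first [left; sub_W | right; sub_W]
    | _ (@setU _ _ _) => rewrite subUset; apply/andP; split; sub_W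
    | _ (@set1 _ _) => rewrite sub1set; sub_W
    | _ => first [assumption | rewrite imset_th_sub_W; sub_W]
    end
  | |- is_true (_ \in _) => rewrite ?th_in_W; by apply: nbhd_in_W
  end.

Local Ltac in_sets :=
  lazymatch goal with
  | |- is_true (_ \subset _) => sub_W
  | _ => do 3 rewrite ?(in_imset_th thK) ?thK ?inE;
    repeat match goal with
    | H : is_true (?x \in ?A) |- context [?x \in ?A] => rewrite H /=
    | H : is_true (~~ (?x \in ?A)) |- context [?x \in ?A] => rewrite (negbTE H) /=
    end; rewrite ?eqxx ?orbT ?andbT ?orTb ?andTb //=
  end.

Section Neighbours.
Variables s t u : T.
Hypotheses (sN : s \in N) (tN : t \in N) (uN : u \in N) (st : s != t) (su : s != u) (tu : t != u).

(* Putting v back adds three edges, putting v' back three more. *)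
Lemma sparse_W_nbhd (X : {set T}) : X \subset W -> s \in X -> t \in X -> u \in X ->
  ecount E X + 3 <= 2 * #|X|.
Proof.
move=> XW sX tX uX.
have vX : v \notin X by apply: contra v_notin_W; apply: (subsetP XW).
have := ecount_star3 vX st su tu sX tX uX (nbhd_edge sN) (nbhd_edge tN) (nbhd_edge uN).
have : ecount E (v |: X) + 2 <= 2 * #|v |: X|.
  apply: (sparse22_ecount sparseE); last by apply/set0Pn; exists v; rewrite setU11.
  by rewrite subUset sub1set vV (subset_trans XW W_subset_V).
rewrite cardsU1 vX; clear; lia.
Qed.

Lemma sparse_W_nbhd_th (X : {set T}) : X \subset W -> s \in X -> t \in X -> u \in X ->
  th s \in X -> th t \in X -> th u \in X -> ecount E X + 4 <= 2 * #|X|.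
Proof.
move=> XW sX tX uX sX' tX' uX'.
have vX : v \notin X by apply: contra v_notin_W; apply: (subsetP XW).
have vX' : th v \notin v |: X.
  by rewrite !inE negb_or (th_free_V vV) /=; apply: contra thv_notin_W; apply: (subsetP XW).
have thN x : x \in N -> [set th v; th x] \in E by move=> ?; rewrite set2_th_edge ?nbhd_edge.
have th_neq := inj_eq (inv_inj thK).
have := ecount_star3 vX st su tu sX tX uX (nbhd_edge sN) (nbhd_edge tN) (nbhd_edge uN).
have := ecount_star3 vX' (_ : th s != th t) (_ : th s != th u) (_ : th t != th u)
  (setU1r _ sX') (setU1r _ tX') (setU1r _ uX') (thN _ sN) (thN _ tN) (thN _ uN).
rewrite !th_neq => /(_ st su tu).
have : ecount E (th v |: (v |: X)) + 2 <= 2 * #|th v |: (v |: X)|.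
  apply: (sparse22_ecount sparseE); last by apply/set0Pn; exists v; rewrite !inE eqxx orbT.
  by rewrite !subUset !sub1set thV vV (subset_trans XW W_subset_V).
rewrite cardsU1 vX' cardsU1 vX; clear; lia.
Qed.

Lemma tight_meet_imset_th (U : {set T}) : U \subset W ->
  (s \in U) || (th s \in U) -> (t \in U) || (th t \in U) -> (u \in U) || (th u \in U) ->
  2 * #|U| <= ecount E U + 3 -> 2 * #|U :&: th @: U| <= ecount E (U :&: th @: U) + 2.
Proof.
move=> UW hs ht hu near.
have sym w : (w \in U) || (th w \in U) -> (w \in U :|: th @: U) && (th w \in U :|: th @: U).
  by rewrite !inE !(in_imset_th thK) thK; case/orP=> ->; rewrite ?orbT.
move: hs ht hu => /sym/andP[? ?] /sym/andP[? ?] /sym/andP[? ?].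
have hU : ecount E (U :|: th @: U) + 4 <= 2 * #|U :|: th @: U|.
  by apply: sparse_W_nbhd_th; rewrite // subUset imset_th_sub_W UW.
have := ecount_supermodular E U (th @: U); have := cardsUI U (th @: U).
have := ecount_imset_th thK thE U; have := card_imset_th thK U.
move: near hU; clear; lia.
Qed.

Lemma no_tight_blocker_pair Y1 Y2 : tight_blocker s t Y1 -> tight_blocker s u Y2 -> False.
Proof.
case=> Y1W s1 t1 tight1 [Y2W s2 u2 tight2].
have hU : ecount E (Y1 :|: Y2) + 3 <= 2 * #|Y1 :|: Y2| by apply: sparse_W_nbhd; in_sets.
have hI : ecount E (Y1 :&: Y2) + 2 <= 2 * #|Y1 :&: Y2| by apply: (sparse_W (x := s)); in_sets.
have := ecount_supermodular E Y1 Y2; have := cardsUI Y1 Y2.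
move: hU hI tight1 tight2; clear; lia.
Qed.

Lemma no_tight_sym_blocker_pair Y1 Y2 : tight_blocker s t Y1 -> sym_blocker s u t Y2 -> False.
Proof.
move=> tb1; case: (tb1) => Y1W s1 t1 tight1 [Y2W [s2 u2 s2' u2'] _ _ tight2].
have hU : ecount E (Y1 :|: Y2) + 3 <= 2 * #|Y1 :|: Y2| by apply: sparse_W_nbhd; in_sets.
have hI : ecount E (Y1 :&: Y2) + 2 <= 2 * #|Y1 :&: Y2| by apply: (sparse_W (x := s)); in_sets.
have near : 2 * #|Y1 :|: Y2| <= ecount E (Y1 :|: Y2) + 3.
  have := ecount_supermodular E Y1 Y2; have := cardsUI Y1 Y2.
  by move: hU hI tight1 tight2; clear; lia.
apply: (no_tight_blocker_pair tb1 (Y2 := (Y1 :|: Y2) :&: th @: (Y1 :|: Y2))).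
by split; [in_sets | in_sets | in_sets | apply: tight_meet_imset_th near; in_sets].
Qed.

Lemma no_sym_blocker_pair_edge Y1 Y2 :
  sym_blocker s t u Y1 -> sym_blocker s u t Y2 -> [set t; u] \in E -> False.
Proof.
case=> Y1W [s1 t1 s1' t1'] u1 u1' near1 [Y2W [s2 u2 s2' u2'] t2 t2' near2] tuE.
(* tu and t'u' join Y1 - Y2 to Y2 - Y1. *)
have cross2 : 2 <= #|cross E Y1 Y2|.
  have <- : #|[set [set t; u]; [set th t; th u]]| = 2 by rewrite cards2 added_edges_neq.
  apply: subset_leq_card.
  apply/subsetP=> e; rewrite !inE => /orP[]/eqP->;
    rewrite ?(set2_th_edge thE) tuE /= !subUset !sub1set; in_sets.
have hU : ecount E (Y1 :|: Y2) + 4 <= 2 * #|Y1 :|: Y2| by apply: sparse_W_nbhd_th; in_sets.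
have hI : ecount E (Y1 :&: Y2) + 2 <= 2 * #|Y1 :&: Y2| by apply: (sparse_W (x := s)); in_sets.
have := ecountUI E Y1 Y2; have := cardsUI Y1 Y2.
move: hU hI near1 near2 cross2; clear; lia.
Qed.

Lemma no_tight_blocker_common_nbr Y :
  tight_blocker s t Y -> [set s; u] \in E -> [set t; u] \in E -> False.
Proof.
case=> YW sY tY tight suE tuE.
have uY : u \notin Y.
  by apply/negP=> uY; have := sparse_W_nbhd YW sY tY uY; move: tight; clear; lia.
have add_u : ecount E Y + #|[set s; t]| <= ecount E (u |: Y).
  apply: (ecount_star uY); first by rewrite subUset !sub1set sY tY.
  by move=> w; rewrite !inE => /orP[]/eqP->; rewrite setUC.
have : ecount E (u |: Y) + 3 <= 2 * #|u |: Y| by apply: sparse_W_nbhd; in_sets.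
move: add_u tight; rewrite (cardsU1 u Y) (negbTE uY) cards2 st; clear; lia.
Qed.

Lemma no_sym_blocker_common_nbr Y :
  sym_blocker s t u Y -> [set s; u] \in E -> [set t; u] \in E -> False.
Proof.
case=> YW [sY tY sY' tY'] uY uY' near suE tuE.
have add_u : ecount E Y + #|[set s; t]| <= ecount E (u |: Y).
  apply: (ecount_star uY); first by rewrite subUset !sub1set sY tY.
  by move=> w; rewrite !inE => /orP[]/eqP->; rewrite setUC.
have uY'' : th u \notin u |: Y by rewrite !inE negb_or (th_free_V (nbhd_in_V uN)).
have add_thu : ecount E (u |: Y) + #|[set th s; th t]| <= ecount E (th u |: (u |: Y)).
  apply: (ecount_star uY''); first by rewrite subUset !sub1set; in_sets.
  by move=> w; rewrite !inE => /orP[]/eqP->; rewrite setUC (set2_th_edge thE).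
have : ecount E (th u |: (u |: Y)) + 4 <= 2 * #|th u |: (u |: Y)|.
  by apply: sparse_W_nbhd_th; in_sets.
move: add_u add_thu near; rewrite (cardsU1 (th u)) (negbTE uY'') (cardsU1 u Y) (negbTE uY).
rewrite !cards2 st (inj_eq (inv_inj thK)) st; clear; lia.
Qed.

Lemma near_tight_meet (A B C : {set T}) w : A \subset W -> B \subset W -> C \subset W ->
  2 * #|A| <= ecount E A + 3 -> 2 * #|B| <= ecount E B + 3 -> 2 * #|C| <= ecount E C + 3 ->
  w \in A -> w \in B ->
  s \in A :|: B :|: C -> t \in A :|: B :|: C -> u \in A :|: B :|: C ->
  th s \in A :|: B :|: C -> th t \in A :|: B :|: C -> th u \in A :|: B :|: C ->
  2 * #|(A :|: B) :&: C| <= ecount E ((A :|: B) :&: C) + 3.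
Proof.
move=> AW BW CW nearA nearB nearC wA wB *.
have hABC : ecount E (A :|: B :|: C) + 4 <= 2 * #|A :|: B :|: C|.
  by apply: sparse_W_nbhd_th => //; in_sets.
have hAB : ecount E (A :&: B) + 2 <= 2 * #|A :&: B| by apply: (sparse_W (x := w)); in_sets.
have := ecount_supermodular E A B; have := ecount_supermodular E (A :|: B) C.
have := cardsUI A B; have := cardsUI (A :|: B) C.
move: hABC hAB nearA nearB nearC; clear; lia.
Qed.

Lemma sym_blockers_no_common_point Y1 Y2 Y3 w :
  sym_blocker s t u Y1 -> sym_blocker s u t Y2 -> sym_blocker t u s Y3 ->
  w \in Y1 -> w \in Y2 -> w \in Y3 -> False.
Proof.
case=> Y1W [s1 t1 s1' t1'] _ _ near1 [Y2W [s2 u2 s2' u2'] _ _ near2]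
  [Y3W [t3 u3 t3' u3'] _ _ near3] w1 w2 w3.
have tight23 : 2 * #|Y2 :&: Y3| <= ecount E (Y2 :&: Y3) + 2.
  have hU : ecount E (Y2 :|: Y3) + 4 <= 2 * #|Y2 :|: Y3| by apply: sparse_W_nbhd_th; in_sets.
  have := ecount_supermodular E Y2 Y3; have := cardsUI Y2 Y3.
  by move: hU near2 near3; clear; lia.
have hU : ecount E (Y1 :|: (Y2 :&: Y3)) + 4 <= 2 * #|Y1 :|: (Y2 :&: Y3)|.
  by apply: sparse_W_nbhd_th; in_sets.
have hI : ecount E (Y1 :&: (Y2 :&: Y3)) + 2 <= 2 * #|Y1 :&: (Y2 :&: Y3)|.
  by apply: (sparse_W (x := w)); in_sets.
have := ecount_supermodular E Y1 (Y2 :&: Y3); have := cardsUI Y1 (Y2 :&: Y3).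
by move: hU hI tight23 near1; clear; lia.
Qed.

Lemma no_sym_blocker_triple Y1 Y2 Y3 :
  sym_blocker s t u Y1 -> sym_blocker s u t Y2 -> sym_blocker t u s Y3 -> False.
Proof.
move=> b1 b2 b3; have no3 := sym_blockers_no_common_point b1 b2 b3.
case: b1 b2 b3 => Y1W [s1 t1 s1' t1'] u1 u1' near1 [Y2W [s2 u2 s2' u2'] t2 t2' near2]
  [Y3W [t3 u3 t3' u3'] s3 s3' near3].
set X := (Y2 :|: Y3) :&: Y1; set Y := (Y1 :|: Y3) :&: Y2.
have nearX : 2 * #|X| <= ecount E X + 3 by apply: (near_tight_meet (w := u)); in_sets.
have nearY : 2 * #|Y| <= ecount E Y + 3 by apply: (near_tight_meet (w := t)); in_sets.
have nearZ : 2 * #|(Y1 :|: Y2) :&: Y3| <= ecount E ((Y1 :|: Y2) :&: Y3) + 3.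
  by apply: (near_tight_meet (w := s)); in_sets.
have disj3 : Y1 :&: Y2 :&: Y3 = set0.
  by apply/setP=> w; rewrite !inE; apply/negbTE/negP => /andP[/andP[w1 w2] w3]; apply: (no3 w).
have disj : (Y1 :&: Y3) :&: (Y2 :&: Y3) = set0 by rewrite setIACA setIid.
have := ecountUI E (Y1 :&: Y3) (Y2 :&: Y3); have := cardsUI (Y1 :&: Y3) (Y2 :&: Y3).
rewrite disj cards0 -setIUl.
have h13 : ecount E (Y1 :&: Y3) + 2 <= 2 * #|Y1 :&: Y3| by apply: (sparse_W (x := t)); in_sets.
have h23 : ecount E (Y2 :&: Y3) + 2 <= 2 * #|Y2 :&: Y3| by apply: (sparse_W (x := u)); in_sets.
have := subset_leq_card (cross_meet_subset E disj3); rewrite -/X -/Y.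
have hU : ecount E (X :|: Y) + 4 <= 2 * #|X :|: Y|.
  by apply: sparse_W_nbhd_th; rewrite /X /Y; in_sets.
have hI : ecount E (X :&: Y) + 2 <= 2 * #|X :&: Y|.
  by apply: (sparse_W (x := s)); rewrite /X /Y; in_sets.
have := ecountUI E X Y; have := cardsUI X Y.
move: hU hI nearX nearY nearZ h13 h23; clear; lia.
Qed.

Lemma blocked_of_not_good : ~~ good s t -> blocked s t u.
Proof.
case/forallPn=> Y; rewrite !negb_imply -ltnNge => /and3P[YW /set0Pn[w wY] over].
move: over (card_added s t Y) (sparse_W YW wY).
case: (boolP ((s \in Y) && (t \in Y))) => [/andP[sY tY] | _];
  case: (boolP ((th s \in Y) && (th t \in Y))) => [/andP[sY' tY'] | _];
  rewrite /nat_of_bool /= => over added sparse.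
- have near : 2 * #|Y| <= ecount E Y + 3 by move: over added; clear; lia.
  (* If Y meets {u, u'}, then Y u th Y contains N and N'. *)
  have [uY | ] := boolP ((u \in Y) || (th u \in Y)).
    left; exists (Y :&: th @: Y); split; [in_sets | in_sets | in_sets | ].
    by apply: tight_meet_imset_th => //; rewrite ?sY ?tY.
  by rewrite negb_or => /andP[uY uY']; right; exists Y; split.
- by left; exists Y; split => //; move: over added; clear; lia.
- left; exists (th @: Y); split; [in_sets | in_sets | in_sets | ].
  have := ecount_imset_th thK thE Y; rewrite card_imset_th //.
  by move: over added; clear; lia.
- by move: over added sparse; clear; lia.
Qed.

End Neighbours.

Lemma not_blocked_common_nbr s t u : s \in N -> t \in N -> u \in N ->
  s != t -> s != u -> t != u -> [set s; u] \in E -> [set t; u] \in E -> ~ blocked s t u.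
Proof.
move=> sN tN uN st su tu suE tuE [[Y b] | [Y b]].
  exact: (no_tight_blocker_common_nbr sN tN uN st su tu b suE tuE).
exact: (no_sym_blocker_common_nbr sN tN uN st su tu b suE tuE).
Qed.

Lemma not_blocked_pair s t u : s \in N -> t \in N -> u \in N ->
  s != t -> s != u -> t != u -> [set t; u] \in E -> blocked s t u -> ~ blocked s u t.
Proof.
move=> sN tN uN st su tu tuE [[Y1 b1] | [Y1 b1]] [[Y2 b2] | [Y2 b2]].
- exact: (no_tight_blocker_pair sN tN uN st su tu b1 b2).
- exact: (no_tight_sym_blocker_pair sN tN uN st su tu b1 b2).
- by apply: (no_tight_sym_blocker_pair sN uN tN su st _ b2 b1); rewrite eq_sym.
- exact: (no_sym_blocker_pair_edge sN tN uN st su tu b1 b2 tuE).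
Qed.

Lemma not_blocked_triple a b c : a \in N -> b \in N -> c \in N ->
  a != b -> a != c -> b != c -> blocked a b c -> blocked a c b -> ~ blocked b c a.
Proof.
move=> aN bN cN ab ac bc.
have ba : b != a by rewrite eq_sym.
have ca : c != a by rewrite eq_sym.
have cb : c != b by rewrite eq_sym.
case=> [[Y1 b1] | [Y1 b1]] [[Y2 b2] | [Y2 b2]] [[Y3 b3] | [Y3 b3]].
all: try exact: (no_tight_blocker_pair aN bN cN ab ac bc b1 b2).
all: try exact: (no_tight_sym_blocker_pair aN bN cN ab ac bc b1 b2).
all: try exact: (no_tight_sym_blocker_pair aN cN bN ac ab cb b2 b1).
- exact: (no_tight_sym_blocker_pair bN cN aN bc ba ca b3 (sym_blocker_sym b1)).
- exact: (no_sym_blocker_triple aN bN cN ab ac bc b1 b2 b3).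
Qed.

Lemma clique_of_blocked a b c : a \in N -> b \in N -> c \in N -> a != b -> a != c -> b != c ->
  [set a; b] \in E \/ blocked a b c -> [set a; c] \in E \/ blocked a c b ->
  [set b; c] \in E \/ blocked b c a ->
  [/\ [set a; b] \in E, [set a; c] \in E & [set b; c] \in E].
Proof.
move=> aN bN cN ab ac bc.
have ba : b != a by rewrite eq_sym.
have ca : c != a by rewrite eq_sym.
have cb : c != b by rewrite eq_sym.
have sw x y : ([set x; y] \in E) = ([set y; x] \in E) by rewrite setUC.
case=> [eab | Bab]; case=> [eac | Bac]; case=> [ebc | Bbc]; first by split.
all: exfalso.
- by apply: (not_blocked_common_nbr bN cN aN bc ba ca _ _ Bbc); rewrite sw.
- by apply: (not_blocked_common_nbr aN cN bN ac ab cb eab _ Bac); rewrite sw.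
- exact: (not_blocked_pair cN aN bN ca cb ab eab (blocked_sym Bac) (blocked_sym Bbc)).
- exact: (not_blocked_common_nbr aN bN cN ab ac bc eac ebc Bab).
- exact: (not_blocked_pair bN aN cN ba bc ac eac (blocked_sym Bab) Bbc).
- exact: (not_blocked_pair aN bN cN ab ac bc ebc Bab Bac).
- exact: (not_blocked_triple aN bN cN ab ac bc Bab Bac Bbc).
Qed.

Lemma edges_not_in_W : [set e in E | ~~ (e \subset W)] = star E v :|: star E (th v).
Proof.
apply/setP=> e; rewrite !inE; case eE: (e \in E) => //=.
have [eV _] := simpleE eE; apply/idP/idP.
  case/subsetPn=> w we; rewrite in_W (subsetP eV w we) andbT negb_and !negbK.
  by case/orP=> /eqP<-; rewrite we ?orbT.
by case/orP=> ve; apply/subsetPn; [exists v | exists (th v)]; rewrite // in_W eqxx ?andbF.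
Qed.

Lemma stars_disjoint : star E v :&: star E (th v) = set0.
Proof.
apply/setP=> e; rewrite !inE; apply/negbTE/negP => /andP[/andP[eE ve] /andP[_ tve]].
have v_tv : v != th v by rewrite eq_sym th_free_V.
have defe : e = [set v; th v].
  by apply/eqP; rewrite eq_sym eqEcard subUset !sub1set ve tve card_edge // cards2 v_tv.
by move: (th_free_E eE); rewrite defe imset_set2 thK setUC eqxx.
Qed.

Lemma card_E_W : #|N| = 3 -> #|E| = ecount E W + 6.
Proof.
move=> N3; rewrite -(cardsID [set e : {set T} | e \subset W] E).
have -> : E :&: [set e : {set T} | e \subset W] = induced E W.
  by apply/setP=> e; rewrite !inE.
have -> : E :\: [set e : {set T} | e \subset W] = star E v :|: star E (th v).
  by rewrite -edges_not_in_W; apply/setP=> e; rewrite !inE andbC.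
have := cardsUI (star E v) (star E (th v)); rewrite stars_disjoint cards0 addn0 => ->.
by rewrite !(card_star simpleE) nbhd_thv card_imset_th // N3.
Qed.

Lemma card_W : #|W| + 2 = #|V|.
Proof.
have v_tv : v != th v by rewrite eq_sym th_free_V.
have vV2 : [set v; th v] \subset V by rewrite subUset !sub1set thV vV.
rewrite /red_V cardsD (setIidPr vV2) cards2 v_tv.
by have := subset_leq_card vV2; rewrite cards2 v_tv; clear; lia.
Qed.

Lemma Z2_graph_red x y : x \in N -> y \in N -> x != y -> Z2_graph W (red_E V E th v x y) th.
Proof.
move=> xN yN xy; split => //.
- move=> e; rewrite !inE => /orP[/andP[eE eW] | /orP[]/eqP->].
  + by split=> //; apply: card_edge.
  + by rewrite subUset !sub1set !nbhd_in_W // cards2 xy.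
  + by rewrite subUset !sub1set !th_nbhd_in_W // cards2 (inj_eq (inv_inj thK)) xy.
- exact: th_in_W.
- move=> e; rewrite !inE thE imset_th_sub_W !(imset_th_eq thK) !imset_set2 !thK.
  by rewrite [X in _ || X]orbC.
Qed.

Lemma sparse22_red x y : good x y -> sparse22 W (red_E V E th v x y).
Proof.
move=> /forallP g V' E' V'0 V'W E'red E'V'.
move/implyP/(_ V'W)/implyP/(_ V'0): (g V'); apply: leq_trans; rewrite leq_add2r.
have sub : E' \subset induced E V' :|: added x y V'.
  apply/subsetP=> e eE'; move: (subsetP E'red e eE') (E'V' e eE').
  by rewrite !inE => /orP[/andP[-> _] | /orP[]/eqP->] ->; rewrite ?eqxx ?orbT.
exact: leq_trans (subset_leq_card sub) (leq_card_setU _ _).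
Qed.

Lemma card_red_E x y : #|N| = 3 -> x \in N -> y \in N -> [set x; y] \notin E ->
  #|red_E V E th v x y| + 2 = 2 * #|W|.
Proof.
move=> N3 xN yN xyE.
have disj : induced E W :&: [set [set x; y]; [set th x; th y]] = set0.
  apply/setP=> e; rewrite !inE; apply/negbTE/negP => /andP[/andP[eE _] /orP[]/eqP ee].
    by move: xyE; rewrite -ee eE.
  by move: xyE; rewrite -(set2_th_edge thE) -ee eE.
have := cardsUI (induced E W) [set [set x; y]; [set th x; th y]].
rewrite disj cards0 addn0 cards2 added_edges_neq // -/(ecount E W) => /= card_UI.
have -> : #|red_E V E th v x y| = ecount E W + 2 := card_UI.
have := card_E_W N3; have := card_W; move: countE; clear; lia.
Qed.

Lemma Ci_tight_red x y : #|N| = 3 -> x \in N -> y \in N -> x != y -> [set x; y] \notin E ->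
  good x y -> Ci_tight W (red_E V E th v x y) th.
Proof.
move=> N3 xN yN xy xyE g; split.
- exact: Z2_graph_red.
- by split; [exact: sparse22_red | exact: card_red_E].
- by move=> w; rewrite in_W => /and3P[_ _]; apply: th_free_V.
- move=> e; rewrite !inE => /orP[/andP[eE _] | /orP[]/eqP->]; first exact: th_free_E.
  + by rewrite imset_set2 eq_sym added_edges_neq.
  + by rewrite imset_set2 !thK added_edges_neq.
Qed.

Definition reducible := exists x y, [/\ x \in N, y \in N, x != y, [set x; y] \notin E &
  Ci_tight W (red_E V E th v x y) th].

Lemma reducible_or_edge_or_blocked x y z : #|N| = 3 -> x \in N -> y \in N -> z \in N ->
  x != y -> x != z -> y != z -> reducible \/ [set x; y] \in E \/ blocked x y z.
Proof.
move=> N3 xN yN zN xy xz yz.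
have [xyE | xyE] := boolP ([set x; y] \in E); first by right; left.
have [g | g] := boolP (good x y).
  by left; exists x, y; split => //; apply: Ci_tight_red.
by right; right; apply: blocked_of_not_good.
Qed.

Lemma K4_or_reducible : #|N| = 3 -> induced_iso_K4 E (v |: N) \/ reducible.
Proof.
move=> N3; have [a [b [c [ab ac bc defN]]]] := set3_of_card3 N3.
have aN : a \in N by rewrite defN !inE eqxx.
have bN : b \in N by rewrite defN !inE eqxx orbT.
have cN : c \in N by rewrite defN !inE eqxx orbT.
have ba : b != a by rewrite eq_sym.
have ca : c != a by rewrite eq_sym.
have cb : c != b by rewrite eq_sym.
have [|Bab] := reducible_or_edge_or_blocked N3 aN bN cN ab ac bc; first by right.
have [|Bac] := reducible_or_edge_or_blocked N3 aN cN bN ac ab cb; first by right.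
have [|Bbc] := reducible_or_edge_or_blocked N3 bN cN aN bc ba ca; first by right.
have [eab eac ebc] := clique_of_blocked aN bN cN ab ac bc Bab Bac Bbc.
left; rewrite defN; apply: induced_iso_K4_clique; rewrite ?nbhd_edge //.
all: by rewrite eq_sym nbhd_neq_v.
Qed.

End Reduction.

Theorem lemma5p4 (T : finType) (V : {set T}) (E : {set {set T}}) (th : T -> T) (v : T) :
  Ci_tight V E th -> v \in V ->
  #|nbhd V E v| = 3 ->
  nbhd V E v :&: nbhd V E (th v) = set0 ->
  induced_iso_K4 E (v |: nbhd V E v) \/
  exists x y : T,
    [/\ x \in nbhd V E v, y \in nbhd V E v, x != y, [set x; y] \notin E &
        Ci_tight (red_V V th v) (red_E V E th v x y) th].
Proof.
move=> [[simpleE thK thV thE] [sparseE countE] th_free_V th_free_E] vV N3 N_disjoint.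
exact: (K4_or_reducible simpleE thK thV thE sparseE th_free_V th_free_E vV N_disjoint countE N3).
Qed.
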